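(* Let $X$ be a real Hilbert space, $f:X\to\mathbb{R}$ a proper $\Phi_{lsc}$-convex function and $U\subset X$ open. If $f$ is twice continuously Fréchet differentiable on $U$, then $\partial_{lsc}f(x)\ne\emptyset$ for every $x\in U$.
   Context: $\Phi_{lsc}$ is the class of functions $\varphi(x)=-a\|x\|^2+\langle v,x\rangle+c$ ($a\ge0$, $v\in X^*$, $c\in\mathbb{R}$); $f$ is $\Phi_{lsc}$-convex if it is the pointwise supremum of the $\varphi\in\Phi_{lsc}$ with $\varphi\le f$; proper means at least one such $\varphi$ exists. $\partial_{lsc}f(x)$ is the set of $(a,v)\in\mathbb{R}_+\times X^*$ with $f(z)-f(x)\ge\langle v,z-x\rangle-a\|z\|^2+a\|x\|^2$ for all $z\in X$. *)

From Stdlib Require Import Reals Lra.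
Open Scope R_scope.

Record HilbertSpace := {
  hcar :> Type;
  hzero : hcar;
  hadd : hcar -> hcar -> hcar;
  hopp : hcar -> hcar;
  hscal : R -> hcar -> hcar;
  hinner : hcar -> hcar -> R;
  hadd_assoc : forall x y z, hadd x (hadd y z) = hadd (hadd x y) z;
  hadd_comm : forall x y, hadd x y = hadd y x;
  hadd_zero : forall x, hadd x hzero = x;
  hadd_opp : forall x, hadd x (hopp x) = hzero;
  hscal_one : forall x, hscal 1 x = x;
  hscal_assoc : forall a b x, hscal a (hscal b x) = hscal (a * b) x;
  hscal_distr_l : forall a x y, hscal a (hadd x y) = hadd (hscal a x) (hscal a y);
  hscal_distr_r : forall a b x, hscal (a + b) x = hadd (hscal a x) (hscal b x);
  hinner_sym : forall x y, hinner x y = hinner y x;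
  hinner_add_l : forall x y z, hinner (hadd x y) z = hinner x z + hinner y z;
  hinner_scal_l : forall a x y, hinner (hscal a x) y = a * hinner x y;
  hinner_pos : forall x, 0 <= hinner x x;
  hinner_def : forall x, hinner x x = 0 -> x = hzero;
  hcomplete : forall u : nat -> hcar,
    (forall eps, 0 < eps -> exists N, forall m n, (N <= m)%nat -> (N <= n)%nat ->
        sqrt (hinner (hadd (u m) (hopp (u n))) (hadd (u m) (hopp (u n)))) < eps) ->
    exists l, forall eps, 0 < eps -> exists N, forall n, (N <= n)%nat ->
        sqrt (hinner (hadd (u n) (hopp l)) (hadd (u n) (hopp l))) < eps
}.

Section HDefs.
Variable X : HilbertSpace.

Definition hsub (x y : X) : X := hadd X x (hopp X y).
Definition hnorm (x : X) : R := sqrt (hinner X x x).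

Definition is_dual (v : X -> R) : Prop :=
  (forall x y, v (hadd X x y) = v x + v y) /\
  (forall a x, v (hscal X a x) = a * v x) /\
  (exists M, forall x, Rabs (v x) <= M * hnorm x).

(** Continuous bilinear forms X x X -> R (= bounded operators X -> dual of X). *)
Definition is_bounded_bilinear (B : X -> X -> R) : Prop :=
  (forall k, is_dual (fun h => B h k)) /\
  (forall h, is_dual (B h)) /\
  (exists M, forall h k, Rabs (B h k) <= M * hnorm h * hnorm k).

Definition in_Phi_lsc (phi : X -> R) : Prop :=
  exists a v c, 0 <= a /\ is_dual v /\
    forall x, phi x = - a * (hnorm x) ^ 2 + v x + c.

Definition Phi_minorant (f : X -> R) (phi : X -> R) : Prop :=
  in_Phi_lsc phi /\ forall z, phi z <= f z.

Definition Phi_lsc_convex (f : X -> R) : Prop :=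
  forall x, is_lub (fun r => exists phi, Phi_minorant f phi /\ r = phi x) (f x).

Definition Phi_lsc_proper (f : X -> R) : Prop :=
  exists phi, Phi_minorant f phi.

Definition subdiff_lsc (f : X -> R) (x : X) (a : R) (v : X -> R) : Prop :=
  0 <= a /\ is_dual v /\
  forall z, f z - f x >= v (hsub z x) - a * (hnorm z) ^ 2 + a * (hnorm x) ^ 2.

Definition h_open (U : X -> Prop) : Prop :=
  forall x, U x -> exists r, 0 < r /\ forall y, hnorm (hsub y x) < r -> U y.

Definition C2_on (f : X -> R) (U : X -> Prop) : Prop :=
  exists (Df : X -> X -> R) (D2f : X -> X -> X -> R),
    (forall x, U x ->
       is_dual (Df x) /\ is_bounded_bilinear (D2f x) /\
       (forall eps, 0 < eps -> exists delta, 0 < delta /\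
          forall h, hnorm h < delta ->
            Rabs (f (hadd X x h) - f x - Df x h) <= eps * hnorm h) /\
       (* D2f x is the Frechet derivative of Df (in the dual) at x *)
       (forall eps, 0 < eps -> exists delta, 0 < delta /\
          forall h, hnorm h < delta -> forall k,
            Rabs (Df (hadd X x h) k - Df x k - D2f x h k) <= eps * hnorm h * hnorm k) /\
       (* D2f is continuous at x (operator norm) *)
       (forall eps, 0 < eps -> exists delta, 0 < delta /\
          forall y, U y -> hnorm (hsub y x) < delta -> forall h k,
            Rabs (D2f y h k - D2f x h k) <= eps * hnorm h * hnorm k)).

End HDefs.

(** The subgradient is [(a, Df x + 2a<x,.>)] for [a] large enough: it suffices to
    bound [f (x + h) - f x - Df x h] below by [-a ||h||^2] for all [h].  Near [0]
    this follows from the mean value theorem on the segment [[x, x + h]] and the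
    Fréchet differentiability of [Df] at [x]; away from [0] a [Phi_lsc]-minorant
    of [f] gives a lower bound [-(A ||h||^2 + B ||h|| + C)], whose affine part is
    dominated by a multiple of [||h||^2] once [||h||] is bounded away from [0]. *)

From Stdlib Require Import Reals Lra Psatz.
Open Scope R_scope.

Lemma quadratic_nonneg_discr A B p : 0 <= A -> 0 <= B ->
  (forall t, 0 <= A + 2 * t * p + t * t * B) -> p * p <= A * B.
Proof.
  intros HA HB H.
  destruct (Req_dec B 0) as [->|HB0].
  - destruct (Req_dec p 0) as [->|Hp]; [nra|].
    specialize (H (- (A + 1) / (2 * p))).
    replace (A + 2 * (- (A + 1) / (2 * p)) * p + - (A + 1) / (2 * p) * (- (A + 1) / (2 * p)) * 0)
      with (-1) in H by (field; auto).
    lra.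
  - specialize (H (- p / B)).
    replace (A + 2 * (- p / B) * p + - p / B * (- p / B) * B) with ((A * B - p * p) / B) in H
      by (field; auto).
    assert (HBpos : 0 < B) by lra.
    apply Rmult_le_compat_r with (r := B) in H; [|lra].
    unfold Rdiv in H. rewrite Rmult_assoc, Rinv_l in H by lra. lra.
Qed.

Lemma Rabs_le_between a b : Rabs a <= b -> - b <= a <= b.
Proof. unfold Rabs; destruct (Rcase_abs a); lra. Qed.

Lemma affine_le_quadratic B C r n : 0 <= B -> 0 <= C -> 0 < r -> r <= n ->
  B * n + C <= (B / r + C / (r * r)) * (n * n).
Proof.
  intros HB HC Hr Hn.
  assert (Hq : 1 <= n / r).
  { apply Rmult_le_reg_r with r; auto. field_simplify; lra. }
  replace ((B / r + C / (r * r)) * (n * n)) with (B * n * (n / r) + C * ((n / r) * (n / r)))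
    by (field; lra).
  assert (B * n <= B * n * (n / r)) by (rewrite <- (Rmult_1_r (B * n)) at 1; apply Rmult_le_compat_l; nra).
  assert (C <= C * ((n / r) * (n / r))) by (rewrite <- (Rmult_1_r C) at 1; apply Rmult_le_compat_l; nra).
  lra.
Qed.

Section Hilbert.
Variable X : HilbertSpace.

Lemma hinner_add_r (x y z : X) : hinner X x (hadd X y z) = hinner X x y + hinner X x z.
Proof. rewrite !(hinner_sym X x), hinner_add_l; reflexivity. Qed.

Lemma hinner_scal_r a (x y : X) : hinner X x (hscal X a y) = a * hinner X x y.
Proof. rewrite !(hinner_sym X x), hinner_scal_l; reflexivity. Qed.

Lemma hnorm_ge0 (x : X) : 0 <= hnorm X x.
Proof. apply sqrt_pos. Qed.

Lemma hnorm_sqr (x : X) : hnorm X x ^ 2 = hinner X x x.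
Proof. apply pow2_sqrt, hinner_pos. Qed.

Lemma hnorm_scal a (x : X) : hnorm X (hscal X a x) = Rabs a * hnorm X x.
Proof.
  unfold hnorm. rewrite hinner_scal_l, hinner_scal_r, <- Rmult_assoc.
  rewrite sqrt_mult_alt by nra. rewrite <- sqrt_Rsqr_abs. reflexivity.
Qed.

Lemma hnorm_add_sqr (x h : X) :
  hnorm X (hadd X x h) ^ 2 = hnorm X x ^ 2 + 2 * hinner X x h + hnorm X h ^ 2.
Proof. rewrite !hnorm_sqr, hinner_add_l, !hinner_add_r, (hinner_sym X h x). ring. Qed.

Lemma Cauchy_Schwarz (x y : X) : Rabs (hinner X x y) <= hnorm X x * hnorm X y.
Proof.
  assert (H : hinner X x y * hinner X x y <= hinner X x x * hinner X y y).
  { apply quadratic_nonneg_discr; try apply hinner_pos. intro t.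
    pose proof (hinner_pos X (hadd X x (hscal X t y))) as P.
    rewrite hinner_add_l, !hinner_add_r, !hinner_scal_l, !hinner_scal_r, (hinner_sym X y x) in P.
    nra. }
  unfold hnorm. rewrite <- sqrt_mult_alt by apply hinner_pos.
  rewrite <- sqrt_Rsqr_abs. apply sqrt_le_1_alt. exact H.
Qed.

Lemma hnorm_add_sqr_le (x h : X) :
  hnorm X (hadd X x h) ^ 2 <= 2 * hnorm X x ^ 2 + 2 * hnorm X h ^ 2.
Proof.
  rewrite hnorm_add_sqr.
  pose proof (Rle_abs (hinner X x h)). pose proof (Cauchy_Schwarz x h).
  pose proof (pow2_ge_0 (hnorm X x - hnorm X h)). nra.
Qed.

Lemma hsub_addKl (x h : X) : hsub X (hadd X x h) x = h.
Proof. unfold hsub. rewrite (hadd_comm X x h), <- hadd_assoc, hadd_opp, hadd_zero. reflexivity. Qed.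

Lemma hadd_subKr (x z : X) : hadd X x (hsub X z x) = z.
Proof.
  unfold hsub. rewrite hadd_comm, <- hadd_assoc, (hadd_comm X (hopp X x) x), hadd_opp, hadd_zero.
  reflexivity.
Qed.

Lemma hscal0 (h : X) : hscal X 0 h = hzero X.
Proof.
  pose proof (f_equal (fun y => hadd X y (hopp X (hscal X 0 h))) (hscal_distr_r X 0 0 h)) as E.
  simpl in E. rewrite Rplus_0_r, <- hadd_assoc, !hadd_opp, hadd_zero in E. now symmetry.
Qed.

Lemma is_dual_add_inner (v : X -> R) (x : X) c :
  is_dual X v -> is_dual X (fun k => v k + c * hinner X x k).
Proof.
  intros [Hadd [Hscal [M HM]]]. split; [|split].
  - intros y z. rewrite Hadd, hinner_add_r. ring.
  - intros a y. rewrite Hscal, hinner_scal_r. ring.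
  - exists (M + Rabs c * hnorm X x). intro k.
    pose proof (HM k). pose proof (Cauchy_Schwarz x k). pose proof (hnorm_ge0 k).
    pose proof (Rabs_triang (v k) (c * hinner X x k)) as Htri. rewrite Rabs_mult in Htri.
    assert (Rabs c * Rabs (hinner X x k) <= Rabs c * (hnorm X x * hnorm X k))
      by (apply Rmult_le_compat_l; [apply Rabs_pos|auto]).
    nra.
Qed.

(* [-a ||z||^2 + a ||x||^2 = -a ||h||^2 - 2a <x, h>] with [h = z - x]. *)
Lemma subdiff_lsc_of_quadratic_lower_bound (f : X -> R) (x : X) (l : X -> R) a :
  0 <= a -> is_dual X l ->
  (forall h, f (hadd X x h) - f x - l h >= - a * hnorm X h ^ 2) ->
  subdiff_lsc X f x a (fun k => l k + 2 * a * hinner X x k).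
Proof.
  intros Ha Hl Hbound. split; [exact Ha | split; [now apply is_dual_add_inner|]].
  intro z. pose proof (Hbound (hsub X z x)) as Hz. pose proof (hnorm_add_sqr x (hsub X z x)) as E.
  rewrite hadd_subKr in Hz, E. rewrite E. nra.
Qed.

Lemma Phi_minorant_lower_bound (f : X -> R) (phi : X -> R) (l : X -> R) (x : X) :
  Phi_minorant X f phi -> is_dual X l ->
  exists A B C, 0 <= A /\ 0 <= B /\ 0 <= C /\ forall h,
    f (hadd X x h) - f x - l h >= - (A * hnorm X h ^ 2 + B * hnorm X h + C).
Proof.
  intros [[b [w [c [Hb [[Hwadd [_ [W HW]]] Hphi]]]]] Hmin] [_ [_ [Ml HMl]]].
  exists (2 * b), (Rabs W + Rabs Ml), (Rabs (c + w x - 2 * b * hnorm X x ^ 2 - f x)).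
  split; [lra|].
  split; [pose proof (Rabs_pos W); pose proof (Rabs_pos Ml); lra|].
  split; [apply Rabs_pos|].
  intro h. set (n := hnorm X h).
  assert (Hn : 0 <= n) by apply hnorm_ge0.
  pose proof (Hmin (hadd X x h)) as Hm. rewrite Hphi, Hwadd in Hm.
  assert (Hsq : b * hnorm X (hadd X x h) ^ 2 <= b * (2 * hnorm X x ^ 2 + 2 * n ^ 2))
    by (apply Rmult_le_compat_l; [exact Hb | apply hnorm_add_sqr_le]).
  pose proof (Rabs_le_between _ _ (HW h)) as HWh.
  pose proof (Rabs_le_between _ _ (HMl h)) as HMlh.
  fold n in HWh, HMlh.
  assert (W * n <= Rabs W * n) by (apply Rmult_le_compat_r; [exact Hn | apply Rle_abs]).
  assert (Ml * n <= Rabs Ml * n) by (apply Rmult_le_compat_r; [exact Hn | apply Rle_abs]).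
  pose proof (Rle_abs (- (c + w x - 2 * b * hnorm X x ^ 2 - f x))) as Hc.
  rewrite Rabs_Ropp in Hc.
  lra.
Qed.

Lemma quadratic_lower_bound_of_near_far (g : X -> R) r K A B C :
  0 < r -> 0 <= K -> 0 <= A -> 0 <= B -> 0 <= C ->
  (forall h, hnorm X h < r -> g h >= - K * hnorm X h ^ 2) ->
  (forall h, g h >= - (A * hnorm X h ^ 2 + B * hnorm X h + C)) ->
  exists a, 0 <= a /\ forall h, g h >= - a * hnorm X h ^ 2.
Proof.
  intros Hr HK HA HB HC Hnear Hfar.
  assert (Hq : 0 <= B / r + C / (r * r)).
  { assert (0 < / r) by (apply Rinv_0_lt_compat; lra).
    assert (0 < / (r * r)) by (apply Rinv_0_lt_compat; nra).
    unfold Rdiv; nra. }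
  exists (A + (B / r + C / (r * r)) + K). split; [lra|].
  intro h. pose proof (hnorm_ge0 h) as Hn. pose proof (Hfar h).
  destruct (Rlt_or_le (hnorm X h) r) as [Hlt|Hge].
  - specialize (Hnear h Hlt). pose proof (pow2_ge_0 (hnorm X h)). nra.
  - pose proof (affine_le_quadratic B C r (hnorm X h) HB HC Hr Hge). nra.
Qed.

Definition frechet_at (f : X -> R) (y : X) (l : X -> R) : Prop :=
  forall eps, 0 < eps -> exists delta, 0 < delta /\
    forall h, hnorm X h < delta -> Rabs (f (hadd X y h) - f y - l h) <= eps * hnorm X h.

Lemma frechet_derivable_pt_lim_line (f : X -> R) (l : X -> R) (x h : X) t0 :
  is_dual X l -> frechet_at f (hadd X x (hscal X t0 h)) l ->
  derivable_pt_lim (fun t => f (hadd X x (hscal X t h))) t0 (l h).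
Proof.
  intros [_ [Hscal _]] Hfr eps Heps.
  set (y := hadd X x (hscal X t0 h)). set (n := hnorm X h).
  assert (Hn : 0 <= n) by apply hnorm_ge0.
  destruct (Hfr (eps / (n + 1))) as [d [Hd Hd']]; [apply Rdiv_lt_0_compat; lra|].
  assert (Hd2 : 0 < d / (n + 1)) by (apply Rdiv_lt_0_compat; lra).
  exists (mkposreal _ Hd2). intros s Hs0 Hs. simpl in Hs.
  rewrite hscal_distr_r, hadd_assoc. fold y.
  assert (Has : 0 < Rabs s) by (apply Rabs_pos_lt; auto).
  assert (Hsn : Rabs s * n < d).
  { apply Rmult_lt_reg_r with (/ (n + 1)); [apply Rinv_0_lt_compat; lra|].
    apply Rle_lt_trans with (Rabs s); [|exact Hs].
    apply Rmult_le_reg_r with (n + 1); [lra|].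
    rewrite Rmult_assoc, Rinv_l by lra. nra. }
  specialize (Hd' (hscal X s h)). rewrite hnorm_scal, Hscal in Hd'. fold n in Hd'.
  specialize (Hd' Hsn). fold y in Hd'.
  replace ((f (hadd X y (hscal X s h)) - f y) / s - l h)
    with ((f (hadd X y (hscal X s h)) - f y - s * l h) / s) by (field; auto).
  unfold Rdiv. rewrite Rabs_mult, Rabs_inv.
  apply Rle_lt_trans with (eps / (n + 1) * n).
  - apply Rmult_le_reg_r with (Rabs s); auto.
    rewrite Rmult_assoc, Rinv_l by lra. nra.
  - replace (eps / (n + 1) * n) with (eps - eps / (n + 1)) by (field; lra).
    assert (0 < eps / (n + 1)) by (apply Rdiv_lt_0_compat; lra). lra.
Qed.

Lemma mean_value_segment (f : X -> R) (Df : X -> X -> R) (x h : X) :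
  (forall t, 0 <= t <= 1 -> let y := hadd X x (hscal X t h) in
     is_dual X (Df y) /\ frechet_at f y (Df y)) ->
  exists t, 0 < t < 1 /\ f (hadd X x h) - f x = Df (hadd X x (hscal X t h)) h.
Proof.
  intro Hseg.
  destruct (MVT_cor2 (fun t => f (hadd X x (hscal X t h)))
              (fun t => Df (hadd X x (hscal X t h)) h) 0 1 Rlt_0_1) as [t [Ht Hmid]].
  { intros t Ht. destruct (Hseg t Ht). now apply frechet_derivable_pt_lim_line. }
  exists t. split; [exact Hmid|].
  rewrite hscal_one, hscal0, hadd_zero in Ht. lra.
Qed.

Section LocalBound.
Variables (f : X -> R) (Df : X -> X -> R) (B : X -> X -> R) (x : X) (r M : R).
Hypothesis Df_frechet : forall y, hnorm X (hsub X y x) < r -> is_dual X (Df y) /\ frechet_at f y (Df y).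
Hypothesis Df_deriv : forall h, hnorm X h < r -> forall k,
  Rabs (Df (hadd X x h) k - Df x k - B h k) <= 1 * hnorm X h * hnorm X k.
Hypothesis B_bounded : forall h k, Rabs (B h k) <= M * hnorm X h * hnorm X k.

Lemma local_quadratic_lower_bound h : hnorm X h < r ->
  f (hadd X x h) - f x - Df x h >= - (Rabs M + 1) * hnorm X h ^ 2.
Proof.
  intro Hh. set (n := hnorm X h) in *.
  assert (Hn : 0 <= n) by apply hnorm_ge0.
  assert (Hseg : forall t, 0 <= t <= 1 -> hnorm X (hscal X t h) <= t * n).
  { intros t Ht. rewrite hnorm_scal, Rabs_right by lra. apply Rle_refl. }
  destruct (mean_value_segment f Df x h) as [t [Ht ->]].
  { intros t Ht. assert (Hball : hnorm X (hsub X (hadd X x (hscal X t h)) x) < r).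
    { rewrite hsub_addKl. pose proof (Hseg t Ht). nra. }
    exact (Df_frechet _ Hball). }
  assert (Hth : hnorm X (hscal X t h) < r) by (pose proof (Hseg t ltac:(lra)); nra).
  pose proof (Rabs_le_between _ _ (Df_deriv _ Hth h)) as Hd.
  pose proof (Rabs_le_between _ _ (B_bounded (hscal X t h) h)) as HB.
  fold n in Hd, HB.
  pose proof (Hseg t ltac:(lra)) as Hs. pose proof (hnorm_ge0 (hscal X t h)).
  assert (M * hnorm X (hscal X t h) * n <= Rabs M * (t * n) * n).
  { apply Rmult_le_compat_r; [exact Hn|].
    apply Rle_trans with (Rabs M * hnorm X (hscal X t h)).
    - apply Rmult_le_compat_r; [assumption | apply Rle_abs].
    - apply Rmult_le_compat_l; [apply Rabs_pos | exact Hs]. }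
  pose proof (Rabs_pos M). nra.
Qed.

End LocalBound.

End Hilbert.

Theorem mainTheorem7 (X : HilbertSpace) (f : X -> R) (U : X -> Prop) :
  Phi_lsc_proper X f -> Phi_lsc_convex X f -> h_open X U -> C2_on X f U ->
  forall x, U x -> exists (a : R) (v : X -> R), subdiff_lsc X f x a v.
Proof.
  intros [phi Hphi] _ HU [Df [D2f HC]] x Ux.
  destruct (HU x Ux) as [r0 [Hr0 Hball]].
  destruct (HC x Ux) as [HDx [[_ [_ [M HM]]] [_ [Hsecond _]]]].
  destruct (Hsecond 1 Rlt_0_1) as [d [Hd Hd']].
  pose proof (Rmin_l r0 d) as Hr_r0. pose proof (Rmin_r r0 d) as Hr_d.
  assert (Hr : 0 < Rmin r0 d) by now apply Rmin_pos.
  set (r := Rmin r0 d) in *.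
  assert (Hnear : forall h, hnorm X h < r ->
            f (hadd X x h) - f x - Df x h >= - (Rabs M + 1) * hnorm X h ^ 2).
  { apply (local_quadratic_lower_bound X f Df (D2f x) x r M); [| | exact HM].
    - intros y Hy. destruct (HC y (Hball y ltac:(lra)))
        as [HDy [_ [Hfr _]]]. split; assumption.
    - intros h Hh. apply Hd'. lra. }
  destruct (Phi_minorant_lower_bound X f phi (Df x) x Hphi HDx) as [A [B [C [HA [HB [HC0 Hfar]]]]]].
  destruct (quadratic_lower_bound_of_near_far X (fun h => f (hadd X x h) - f x - Df x h) r (Rabs M + 1) A B C)
    as [a [Ha Hbound]]; auto.
  { pose proof (Rabs_pos M); lra. }
  exists a, (fun k => Df x k + 2 * a * hinner X x k).
  now apply subdiff_lsc_of_quadratic_lower_bound.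
Qed.
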